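(* For $k\ge 2$, the number of minimal unavoidable subsets of $\overline{S_k}$ is at most $\binom{k!}{k!/2}$.
   Context: For $\sigma\in S_n$, the cyclic permutation $[\sigma]$ is the set of all rotations of $\sigma$. For $\pi\in S_k$, the totally vincular pattern $\overline{\pi}$ is $\pi$ with all adjacent positions overlined; a cyclic permutation $[\sigma]$ of length $n\ge k$ contains $\overline{\pi}$ if some $k$ cyclically consecutive entries of $\sigma$ are order-isomorphic to $\pi$. $\overline{S_k}$ is the set of totally vincular patterns of length $k$. For $\Pi\subseteq\overline{S_k}$, $\mathrm{Av}_n[\Pi]$ is the set of cyclic permutations of length $n$ containing no pattern of $\Pi$. $\Pi$ is unavoidable if $|\mathrm{Av}_n[\Pi]|=0$ for all sufficiently large $n$, avoidable otherwise; it is minimal unavoidable if it is unavoidable and every proper subset is avoidable. *)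

From mathcomp Require Import all_boot all_fingroup.
Set Implicit Arguments. Unset Strict Implicit. Unset Printing Implicit Defensive.

Definition cyc_entry (n : nat) (s : {perm 'I_n}) (j : nat) : nat :=
  nth 0 [seq val (s x) | x <- enum 'I_n] (j %% n).

(* [sigma] contains the totally vincular pattern \overline{pi}:
   some k cyclically consecutive entries are order-isomorphic to pi. *)
Definition cyc_contains (n k : nat) (s : {perm 'I_n}) (p : {perm 'I_k}) : Prop :=
  k <= n /\
  exists i : 'I_n, forall a b : 'I_k,
    (cyc_entry s (i + a) < cyc_entry s (i + b)) = (val (p a) < val (p b)).

Definition cyc_avoids (n k : nat) (s : {perm 'I_n}) (P : {set {perm 'I_k}}) : Prop :=
  forall p, p \in P -> ~ cyc_contains s p.

Definition unavoidable (k : nat) (P : {set {perm 'I_k}}) : Prop :=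
  exists N, forall n, N <= n -> forall s : {perm 'I_n}, ~ cyc_avoids s P.

Definition avoidable (k : nat) (P : {set {perm 'I_k}}) : Prop := ~ unavoidable P.

Definition minimal_unavoidable (k : nat) (P : {set {perm 'I_k}}) : Prop :=
  unavoidable P /\ forall Q : {set {perm 'I_k}}, Q \proper P -> avoidable Q.

From mathcomp Require Import all_boot all_fingroup.
From mathcomp Require Import zify.

Set Implicit Arguments.
Unset Strict Implicit.
Unset Printing Implicit Defensive.

(* A proper subset of a minimal unavoidable set is avoidable, so the minimal
   unavoidable subsets of S_k form an antichain in the power set of S_k and
   Sperner's theorem bounds their number by C(k!, k!/2).  Sperner's theorem
   follows from the LYM inequality: |a|! (n - |a|)! counts the orderings of an
   n-set U that list a first, and classifying them by their last element
   x \notin a reduces the inequality for U to the one for U \ x. *)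

Lemma leq_bin_succ n i : i.*2 < n -> 'C(n, i) <= 'C(n, i.+1).
Proof.
move=> lt_2i_n; rewrite -(leq_pmul2l (ltn0Sn i)) mul_bin_left.
by rewrite leq_mul2r; apply/orP; right; lia.
Qed.

Lemma leq_bin_half n m : 'C(n, m) <= 'C(n, n./2).
Proof.
wlog le_m_half : m / m <= n./2.
  move=> bin_le; case: (leqP m n./2) => [|lt_half_m]; first exact: bin_le.
  case: (leqP m n) => [le_mn|lt_nm]; last by rewrite bin_small.
  by rewrite -bin_sub //; apply: bin_le; lia.
pose D := [pred i | i <= n./2].
have bin_mono : {in D &, {homo binomial n : i j / i <= j}}.
  apply: homo_leq_in => //; first exact: leq_trans.
  - by move=> i j _ jD k /andP[_ /ltnW /leq_trans]; apply.
  - by move=> i _; rewrite inE => Si_half; apply: leq_bin_succ; lia.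
by apply: bin_mono; rewrite ?inE.
Qed.

Lemma fact_half_le n m : m <= n ->
  (n./2)`! * (n - n./2)`! <= m`! * (n - m)`!.
Proof.
move=> le_mn; have le_half_n : n./2 <= n by lia.
have bin_half_gt0 : 0 < 'C(n, n./2) by rewrite bin_gt0.
rewrite -(leq_pmul2l bin_half_gt0) bin_fact //.
by rewrite -(bin_fact le_mn) leq_mul2r leq_bin_half orbT.
Qed.

Section Sperner.

Variable T : finType.

Definition antichain (A : {set {set T}}) :=
  forall a b, a \in A -> b \in A -> ~~ (a \proper b).

Lemma antichain_sub (A B : {set {set T}}) :
  B \subset A -> antichain A -> antichain B.
Proof. by move=> /subsetP sBA antiA a b /sBA aA /sBA; apply: antiA. Qed.

Lemma antichain_top (U : {set T}) (A : {set {set T}}) :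
  A \subset powerset U -> antichain A -> U \in A -> A = [set U].
Proof.
move=> /subsetP sAU antiA UA; apply/setP => a; rewrite inE.
apply/idP/eqP => [aA|-> //]; apply/eqP.
by rewrite eqEproper -powersetE sAU //= antiA.
Qed.

Lemma powerset_notin_proper (U : {set T}) (A : {set {set T}}) :
  A \subset powerset U -> U \notin A -> forall a, a \in A -> a \proper U.
Proof.
move=> /subsetP sAU notUA a aA; rewrite properEneq -powersetE sAU // andbT.
by apply: contraNneq notUA => <-.
Qed.

Lemma fact_card_setD (a U : {set T}) : a \proper U ->
  (#|U| - #|a|)`! = \sum_(x in U | x \notin a) (#|U|.-1 - #|a|)`!.
Proof.
move=> ltaU; have saU := proper_sub ltaU; have := proper_card ltaU.
rewrite sum_nat_const.
have -> : #|[pred x in U | x \notin a]| = #|U :\: a|.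
  by apply: eq_card => x; rewrite !inE andbC.
rewrite cardsD (setIidPr saU).
by case: #|U| => // n lt_a_Sn; rewrite subSn // factS.
Qed.

Lemma lym (U : {set T}) (A : {set {set T}}) :
  A \subset powerset U -> antichain A ->
  \sum_(a in A) #|a|`! * (#|U| - #|a|)`! <= #|U|`!.
Proof.
have [n] := ubnP #|U|; elim: n U A => // n IH U A ltUn sAU antiA.
case: (boolP (U \in A)) => [UA|notUA].
  by rewrite (antichain_top sAU antiA UA) big_set1 subnn muln1.
have ltaU := powerset_notin_proper sAU notUA.
case cardU: #|U| => [|m] in ltUn *.
  by rewrite big1 // => a /ltaU /proper_card; rewrite cardU.
have split_chains :
    \sum_(a in A) #|a|`! * (m.+1 - #|a|)`!
  = \sum_(x in U) \sum_(a in A | x \notin a) #|a|`! * (m - #|a|)`!.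
  transitivity (\sum_(a in A) \sum_(x in U | x \notin a) #|a|`! * (m - #|a|)`!).
    apply: eq_bigr => a /ltaU ltaU'.
    by rewrite -cardU (fact_card_setD ltaU') big_distrr cardU.
  rewrite (exchange_big_dep (mem U)) /=; last by move=> a x _ /andP[].
  by apply: eq_bigr => x xU; apply: eq_bigl => a; rewrite xU.
rewrite split_chains factS -cardU -sum_nat_const.
apply: leq_sum => x xU.
have cardUx : #|U :\ x| = m by move: (cardsD1 x U); rewrite xU cardU => -[].
have := IH (U :\ x) [set a in A | x \notin a].
rewrite cardUx big_set; apply => //.
- apply/subsetP => a; rewrite !inE subsetD1 andbC => /andP[xNa aA].
  by rewrite xNa proper_sub ?ltaU.
- by apply: antichain_sub antiA; apply/subsetP => a; rewrite inE => /andP[].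
Qed.

Theorem sperner (A : {set {set T}}) :
  antichain A -> #|A| <= 'C(#|T|, #|T|./2).
Proof.
move=> antiA; have sAT : A \subset powerset setT by rewrite powersetT subsetT.
have := lym sAT antiA; rewrite cardsT => lymT.
have le_half : #|T|./2 <= #|T| by lia.
have fact_pos : 0 < (#|T|./2)`! * (#|T| - #|T|./2)`! by rewrite muln_gt0 !fact_gt0.
rewrite -(leq_pmul2r fact_pos) bin_fact // -sum_nat_const.
by apply: leq_trans lymT; apply: leq_sum => a _; apply/fact_half_le/max_card.
Qed.

End Sperner.

Lemma minimal_unavoidable_antichain (k : nat) (A : {set {set {perm 'I_k}}}) :
  (forall P, P \in A -> minimal_unavoidable P) -> antichain A.
Proof.
move=> minA P Q /minA [unavP _] /minA [_ minQ].
by apply/negP => ltPQ; apply: minQ ltPQ unavP.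
Qed.

Theorem proposition6p2 (k : nat) (hk : 2 <= k)
  (A : {set {set {perm 'I_k}}}) :
  (forall P, P \in A -> minimal_unavoidable P) ->
  #|A| <= 'C(k`!, k`! %/ 2).
Proof.
move=> /minimal_unavoidable_antichain /sperner.
by rewrite card_Sn divn2.
Qed.
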